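(* Let $k\ge1$, $\lambda>0$, $\beta\in[0,\infty]$ and $\mathcal{D}\in\{\mathcal{E},\mathcal{O}\}^k$. For any $\mathcal{D}$-polymer $\gamma=(A_1,\dots,A_k)$, \[ \omega(\gamma) \le \lambda^{\|\gamma\|} \tilde\alpha_k^{\|N(\gamma)\|}, \] where $\|\gamma\|:=\sum_i|A_i|$, $\|N(\gamma)\|:=\sum_i|N(A_i)|$, $\tilde\alpha_k:=\alpha_k^{1/k}$ and $\alpha_k := \frac{1 + ((1+\lambda)^k-1)e^{-\beta}}{(1+\lambda)^k}$.
   Context: $Q_d$ is the hypercube on $\{0,1\}^d$, $\mathcal{E},\mathcal{O}$ its even and odd vertices; $N(U)$ the neighborhood, $[U]:=\{v:N(v)\subset N(U)\}$ the closure; $E(A,B)$ the edges between $A$ and $B$. A polymer is a tuple $\gamma=(A_1,\dots,A_k)$ with each $A_i$ contained in $\mathcal{E}$ or in $\mathcal{O}$, $|[A_i]|\le\frac34 2^{d-1}$, and $H_\gamma$ connected (hence nonempty), where $H_\gamma$ has vertices $(i,u)$, $u\in A_i$, with $(i,u)\sim(j,v)$ iff ($i=j$ and $\mathrm{dist}(u,v)=2$) or ($i\ne j$ and $\mathrm{dist}(u,v)\in\{0,1\}$). A $\mathcal{D}$-polymer additionally has $A_i\subset\mathcal{D}_i$ for all $i$. Its weight is \[ \omega(\gamma):= \sum_{B_i \subset N(A_i)\,\forall i} \frac{\lambda^{\sum_i(|A_i|+|B_i|)}}{(1+\lambda)^{\sum_i|N(A_i)|}} e^{-\beta|E(A_1,B_1)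 \cup \cdots \cup E(A_k,B_k)|}. \] *)

From HB Require Import structures.
From mathcomp Require Import all_boot all_order all_algebra.
From mathcomp Require Import all_classical all_reals all_analysis.
Set Implicit Arguments. Unset Strict Implicit. Unset Printing Implicit Defensive.
Import Order.TTheory GRing.Theory Num.Theory.
Local Open Scope ring_scope.

Definition vtx (d : nat) := {ffun 'I_d -> bool}.

(* Hamming distance = graph distance in Q_d. *)
Definition hdist d (u v : vtx d) : nat := #|[set i | u i != v i]|.
Definition hadj d (u v : vtx d) : bool := hdist u v == 1%N.

(* Even vertices E (true) and odd vertices O (false). *)
Definition is_even d (u : vtx d) : bool := ~~ odd #|[set i | u i]|.
Definition parity_class d (b : bool) : {set vtx d} := [set u | is_even u == b].
Definition Even d : {set vtx d} := parity_class d true.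
Definition Odd d : {set vtx d} := parity_class d false.

Definition nbh d (U : {set vtx d}) : {set vtx d} :=
  [set v | [exists u in U, hadj u v]].
Definition closure_set d (U : {set vtx d}) : {set vtx d} :=
  [set v | nbh [set v] \subset nbh U].

Definition Hvert d k (A : 'I_k -> {set vtx d}) : {set ('I_k * vtx d)} :=
  [set p | p.2 \in A p.1].
Definition Hadj d k (A : 'I_k -> {set vtx d}) : rel ('I_k * vtx d) :=
  fun p q =>
    [&& p \in Hvert A, q \in Hvert A &
        if p.1 == q.1 then hdist p.2 q.2 == 2%N
        else (hdist p.2 q.2 <= 1)%N].
Definition H_connected d k (A : 'I_k -> {set vtx d}) : Prop :=
  Hvert A != finset.set0 /\
  forall p q, p \in Hvert A -> q \in Hvert A -> connect (Hadj A) p q.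

(* Polymers: |[A_i]| <= (3/4) 2^(d-1), written as 8 |[A_i]| <= 3 2^d. *)
Definition polymer d k (A : 'I_k -> {set vtx d}) : Prop :=
  (forall i, A i \subset Even d \/ A i \subset Odd d) /\
  (forall i, 8 * #|closure_set (A i)| <= 3 * 2 ^ d)%N /\
  H_connected A.
Definition D_polymer d k (D : 'I_k -> bool) (A : 'I_k -> {set vtx d}) : Prop :=
  polymer A /\ forall i, A i \subset parity_class d (D i).

(* E(A,B): edges of Q_d (as 2-element vertex sets) between A and B. *)
Definition edges_between d (A B : {set vtx d}) : {set {set vtx d}} :=
  [set [set u; v] | u in A, v in B & hadj u v].

(* e^{-beta * n} for beta in [0, +oo], with e^{-oo * 0} = 1 and
   e^{-oo * n} = 0 for n > 0. *)
Definition exp_neg {R : realType} (beta : \bar R) (n : nat) : R :=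
  match beta with
  | EFin b => expR (- (b * n%:R))
  | _ => if n == 0%N then 1 else 0
  end.

Definition exp_neg1 {R : realType} (beta : \bar R) : R := exp_neg beta 1.

Definition weight {R : realType} (lambda : R) (beta : \bar R) d k
    (A : 'I_k -> {set vtx d}) : R :=
  \sum_(B : {ffun 'I_k -> {set vtx d}} | [forall i, B i \subset nbh (A i)])
    lambda ^+ (\sum_i (#|A i| + #|B i|))%N
    / (1 + lambda) ^+ (\sum_i #|nbh (A i)|)%N
    * exp_neg beta #|\bigcup_i edges_between (A i) (B i)|.

Definition alpha_k {R : realType} (lambda : R) (beta : \bar R) (k : nat) : R :=
  (1 + ((1 + lambda) ^+ k - 1) * exp_neg1 beta) / (1 + lambda) ^+ k.

Definition alpha_tilde {R : realType} (lambda : R) (beta : \bar R) (k : nat) : R :=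
  powR (alpha_k lambda beta k) (k%:R^-1).

Definition poly_size d k (A : 'I_k -> {set vtx d}) : nat := (\sum_i #|A i|)%N.
Definition poly_nbh_size d k (A : 'I_k -> {set vtx d}) : nat :=
  (\sum_i #|nbh (A i)|)%N.

From HB Require Import structures.
From mathcomp Require Import all_boot all_order all_algebra.
From mathcomp Require Import all_classical all_reals all_analysis.
From mathcomp Require Import ring.
Import Order.TTheory GRing.Theory Num.Theory.
Local Open Scope ring_scope.

Set Implicit Arguments.
Unset Strict Implicit.
Unset Printing Implicit Defensive.

(* Every v in N(A_i) is joined to A_i by a chosen edge e_i(v) of Q_d.  Since
   A_i lies in one parity class it is disjoint from N(A_i), so v |-> e_i(v) is
   injective on N(A_i).  Hence (B_i)_i is determined by its profile
   F(y) = {i | y = e_i(v) for some v in B_i} ([edge_owners]), which satisfies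
   F(y) \subset K(y) = {i | y = e_i(v) for some v in N(A_i)} and
   sum_y |F(y)| = sum_i |B_i|; moreover every y with F(y) nonempty lies in the
   union of the E(A_i, B_i).  The sum over all profiles factorises over the
   edges into prod_y (1 + ((1 + lambda)^|K(y)| - 1) e^-beta); as |K(y)| <= k,
   monotonicity of power means bounds each factor by
   (alpha_k (1 + lambda)^k)^(|K(y)|/k), and sum_y |K(y)| = sum_i |N(A_i)|. *)

(* The power mean ((1 - x) + x q^m)^(1/m) of 1 and q is nondecreasing in m. *)
Lemma power_mean_monotone (R : realType) (q x : R) (m k : nat) :
  0 <= q -> 0 <= x <= 1 -> (m <= k)%N ->
  1 + (q ^+ m - 1) * x <= powR (1 + (q ^+ k - 1) * x) k%:R^-1 ^+ m.
Proof.
move=> q0 /andP[x0 x1]; case: m => [_|m mk].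
  by rewrite !expr0 subrr mul0r addr0.
have k0 : (k%:R : R) != 0 by rewrite pnatr_eq0 -lt0n (leq_trans _ mk).
pose p : R := k%:R / m.+1%:R.
have p1 : 1 <= p by rewrite ler_pdivlMr ?ltr0n // mul1r ler_nat.
have mixE (n : nat) : 1 + (q ^+ n - 1) * x = x * q ^+ n + (1 - x) * 1 by ring.
have qmp : powR (q ^+ m.+1) p = q ^+ k.
  by rewrite -powR_mulrn // -powRrM mulrCA mulfV ?pnatr_eq0 // mulr1 powR_mulrn.
have jensen : powR (1 + (q ^+ m.+1 - 1) * x) p <= 1 + (q ^+ k - 1) * x.
  have := convex_powR p1 (Itv01 x0 x1) (x := q ^+ m.+1) (y := 1).
  rewrite !inE /= !in_itv /= !andbT exprn_ge0 // ler01 => /(_ isT isT).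
  by rewrite convRE /= powR1 qmp !mixE.
have L0 : 0 <= 1 + (q ^+ m.+1 - 1) * x.
  by rewrite mixE addr_ge0 ?mulr_ge0 ?exprn_ge0 ?subr_ge0.
have p0 : p != 0 by rewrite gt_eqF // (lt_le_trans ltr01).
rewrite -[X in X <= _](powRr1 L0) -[in X in _ `^ X <= _](mulfV p0) powRrM.
rewrite -[X in _ <= X]powR_mulrn ?powR_ge0 // -[X in _ <= X]powRrM.
rewrite (_ : k%:R^-1 * m.+1%:R = p^-1); last by rewrite invf_div mulrC.
have Y0 : 0 <= 1 + (q ^+ k - 1) * x := le_trans (powR_ge0 _ _) jensen.
apply: ge0_ler_powR jensen; rewrite ?nnegrE ?powR_ge0 //.
by rewrite invr_ge0 (le_trans ler01 p1).
Qed.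

Lemma exp_negE (R : realType) (beta : \bar R) n : (0 <= beta)%E ->
  exp_neg beta n = exp_neg1 beta ^+ n.
Proof.
case: beta => [b| |] //= _; first by rewrite mulr1 -mulNr expRM_natr.
by rewrite expr0n; case: n.
Qed.

Lemma exp_neg1_itv (R : realType) (beta : \bar R) : (0 <= beta)%E ->
  0 <= exp_neg1 beta <= 1.
Proof.
case: beta => [b| |] //= b0; last by rewrite lexx ler01.
by rewrite expR_ge0 expR_le1 mulr1 oppr_le0 -lee_fin.
Qed.

Lemma alpha_tildeE (R : realType) (lambda : R) (beta : \bar R) k :
  (0 < k)%N -> 0 < lambda -> (0 <= beta)%E ->
  alpha_tilde lambda beta k =
  powR (1 + ((1 + lambda) ^+ k - 1) * exp_neg1 beta) k%:R^-1 / (1 + lambda).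
Proof.
move=> k0 l0 b0; have /andP[x0 _] := exp_neg1_itv b0.
have q0 : 0 < 1 + lambda by rewrite addr_gt0.
have Q0 : 0 < (1 + lambda) ^+ k by rewrite exprn_gt0.
rewrite /alpha_tilde /alpha_k powRM; last 2 first.
- by rewrite addr_ge0 // mulr_ge0 // subr_ge0 exprn_ege1 // lerDl ltW.
- by rewrite invr_ge0 ltW.
congr (_ * _).
rewrite -powR_inv1 ?(ltW Q0) // -powRrM mulN1r powRN.
rewrite -powR_mulrn ?(ltW q0) // -powRrM mulfV ?pnatr_eq0 -?lt0n //.
by rewrite powRr1 // ltW.
Qed.

Lemma sum_indicator (T : finType) (P : pred T) :
  (\sum_t P t = #|[set t | P t]|)%N.
Proof. by rewrite -sum1dep_card [RHS]big_mkcond. Qed.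

Lemma sum_card_incidence (I T : finType) (F : I -> {set T}) :
  (\sum_t #|[set i | t \in F i]| = \sum_i #|F i|)%N.
Proof.
under eq_bigr do rewrite -sum_indicator.
rewrite exchange_big; apply: eq_bigr => i _.
by rewrite sum_indicator; apply: eq_card => t; rewrite inE.
Qed.

Lemma ler_sum_subset (R : numDomainType) (I : finType) (P Q : {pred I})
    (f : I -> R) :
  {subset Q <= P} -> (forall i, 0 <= f i) ->
  \sum_(i in Q) f i <= \sum_(i in P) f i.
Proof.
move=> QP f0; rewrite big_mkcond [leRHS]big_mkcond; apply: ler_sum => i _.
by case: ifP => [/QP ->|_] //; case: ifP.
Qed.

Lemma sum_subset_exprn (R : comNzRingType) (T : finType) (K : {set T}) (a : R) :
  \sum_(Z : {set T} | Z \subset K) a ^+ #|Z| = (1 + a) ^+ #|K|.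
Proof.
rewrite (partition_big (fun Z : {set T} => inord #|Z| : 'I_#|K|.+1) xpredT) //=.
rewrite exprDn; apply: eq_bigr => j _; rewrite expr1n mul1r.
rewrite (eq_bigr (fun _ => a ^+ j)); last first.
  by move=> Z /andP[sZK /eqP <-]; rewrite inordK // ltnS subset_leq_card.
rewrite sumr_const -cards_draws; congr (_ *+ _); apply: eq_card => Z.
rewrite unfold_in !inE /=; case sZK: (Z \subset K) => //=.
by rewrite -val_eqE /= inordK // ltnS subset_leq_card.
Qed.

Lemma sum_subset_exprn_nonempty (R : comNzRingType) (T : finType) (K : {set T})
    (a x : R) :
  \sum_(Z : {set T} | Z \subset K) a ^+ #|Z| * x ^+ (Z != finset.set0) =
  1 + ((1 + a) ^+ #|K| - 1) * x.
Proof.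
rewrite -sum_subset_exprn (bigD1 finset.set0) ?finset.sub0set //=.
rewrite [in RHS](bigD1 finset.set0) ?finset.sub0set //= cards0 eqxx mul1r.
rewrite expr0 [1 + _ - 1]addrC addKr mulr_suml; congr (_ + _).
by apply: eq_bigr => Z /andP[_ ->].
Qed.

Definition profile_weight (R : pzSemiRingType) (T I : finType) (a x : R)
    (F : {ffun T -> {set I}}) : R :=
  \prod_t (a ^+ #|F t| * x ^+ (F t != finset.set0)).

Lemma profile_weight_ge0 (R : numDomainType) (T I : finType) (a x : R)
    (F : {ffun T -> {set I}}) :
  0 <= a -> 0 <= x -> 0 <= profile_weight a x F.
Proof.
by move=> a0 x0; apply: prodr_ge0 => t _; rewrite mulr_ge0 ?exprn_ge0.
Qed.

Lemma sum_profile_weight_family (R : comNzRingType) (T I : finType)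
    (K : T -> {set I}) (a x : R) :
  \sum_(F in family (fun t (Z : {set I}) => Z \subset K t))
     profile_weight a x F =
  \prod_t (1 + ((1 + a) ^+ #|K t| - 1) * x).
Proof.
under [RHS]eq_bigr do rewrite -sum_subset_exprn_nonempty.
by rewrite bigA_distr_big_dep.
Qed.

Section CanonicalEdges.
Variable d : nat.
Implicit Types (u v : vtx d) (U B : {set vtx d}).

Lemma hadj_parity u v : hadj u v -> is_even u != is_even v.
Proof.
rewrite /hadj /hdist => /cards1P[j uvj].
have uvE i : (u i != v i) = (i == j).
  by rewrite -[RHS]finset.in_set1 -uvj inE.
have same : [set i | u i] :\ j = [set i | v i] :\ j.
  apply/setP => i; rewrite !inE; have [//|/negbTE] := eqVneq i j.
  by rewrite -uvE => /negbFE/eqP->.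
rewrite /is_even (cardsD1 j [set i | u i]) (cardsD1 j [set i | v i]) same !inE.
move: (uvE j); rewrite eqxx.
by case: (u j); case: (v j) => //= _; case: (odd _).
Qed.

Lemma parity_class_nbhF b U v :
  U \subset parity_class d b -> v \in U -> v \notin nbh U.
Proof.
move=> sU vU; rewrite inE; apply/existsP => -[u /andP[uU /hadj_parity]].
move: (fintype.subsetP sU u uU) (fintype.subsetP sU v vU).
by rewrite !inE => /eqP-> /eqP->; rewrite eqxx.
Qed.

Definition nbh_rep U v : vtx d := odflt v [pick u in U | hadj u v].

Lemma nbh_repP U v : v \in nbh U -> nbh_rep U v \in U /\ hadj (nbh_rep U v) v.
Proof.
rewrite inE => /existsP[u /andP[uU huv]]; rewrite /nbh_rep.
by case: pickP => [w /andP[-> ->] //|/(_ u)]; rewrite uU huv.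
Qed.

Definition nbh_edge U v : {set vtx d} := [set nbh_rep U v; v].

Lemma nbh_edge_inj b U :
  U \subset parity_class d b -> {in nbh U &, injective (nbh_edge U)}.
Proof.
move=> sU v w vN wN e; apply/eqP; apply: contraT => nvw.
have : v \in nbh_edge U w by rewrite -e !inE eqxx orbT.
rewrite !inE (negbTE nvw) orbF => /eqP vrep.
have [repU _] := nbh_repP wN.
by move: vN; rewrite vrep (negbTE (parity_class_nbhF sU repU)).
Qed.

Lemma nbh_edge_between U B :
  B \subset nbh U -> nbh_edge U @: B \subset edges_between U B.
Proof.
move=> sB; apply/fintype.subsetP => _ /imsetP[v vB ->].
have [repU repv] := nbh_repP (fintype.subsetP sB v vB).
by apply/imset2P; exists (nbh_rep U v) v; rewrite ?inE ?vB.
Qed.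

End CanonicalEdges.

Section EdgeOwners.
Variables (d k : nat) (D : 'I_k -> bool) (A : 'I_k -> {set vtx d}).
Hypothesis A_parity : forall i, A i \subset parity_class d (D i).
Implicit Types (S : 'I_k -> {set vtx d}) (B : {ffun 'I_k -> {set vtx d}}).

Definition edge_owners (S : 'I_k -> {set vtx d}) :
    {ffun {set vtx d} -> {set 'I_k}} :=
  [ffun y => [set i | y \in nbh_edge (A i) @: S i]].

Definition nbh_subfamilies : {set {ffun 'I_k -> {set vtx d}}} :=
  [set B : {ffun 'I_k -> {set vtx d}} | [forall i, B i \subset nbh (A i)]].

Lemma sum_card_edge_owners S : (forall i, S i \subset nbh (A i)) ->
  (\sum_y #|edge_owners S y| = \sum_i #|S i|)%N.
Proof.
move=> sS; under eq_bigr do rewrite ffunE.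
rewrite sum_card_incidence; apply: eq_bigr => i _; rewrite card_in_imset //.
by apply: sub_in2 (nbh_edge_inj (A_parity i)); apply/fintype.subsetP.
Qed.

Lemma mem_edge_owners S i v : S i \subset nbh (A i) -> v \in nbh (A i) ->
  (i \in edge_owners S (nbh_edge (A i) v)) = (v \in S i).
Proof.
move=> sS vN; rewrite ffunE inE.
apply/imsetP/idP => [[w wS e]|vS]; last by exists v.
by rewrite (nbh_edge_inj (A_parity i) vN (fintype.subsetP sS w wS) e).
Qed.

Lemma edge_owners_inj :
  {in nbh_subfamilies &, injective (fun B => edge_owners B)}.
Proof.
move=> B1 B2 /[!inE] /forallP sB1 /forallP sB2 e.
apply/ffunP => i; apply/setP => v.
have [vN|vN] := boolP (v \in nbh (A i)).
  by rewrite -!mem_edge_owners // e.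
by rewrite (contraNF (fintype.subsetP (sB1 i) v))
  ?(contraNF (fintype.subsetP (sB2 i) v)).
Qed.

Lemma edge_ownersS S S' y : (forall i, S i \subset S' i) ->
  edge_owners S y \subset edge_owners S' y.
Proof.
move=> sS; apply/fintype.subsetP => i; rewrite !ffunE !inE.
exact: fintype.subsetP (imsetS _ (sS i)) y.
Qed.

Lemma card_owned_edges B : (forall i, B i \subset nbh (A i)) ->
  (#|[set y | edge_owners B y != finset.set0]| <=
   #|\bigcup_i edges_between (A i) (B i)|)%N.
Proof.
move=> sB; apply: subset_leq_card; apply/fintype.subsetP => y.
rewrite inE => /set0Pn[i]; rewrite ffunE inE => yi.
apply/bigcupP; exists i => //.
exact: fintype.subsetP (nbh_edge_between (sB i)) _ yi.
Qed.

Lemma weight_le (R : realType) (lambda : R) (beta : \bar R) :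
  0 <= lambda -> (0 <= beta)%E ->
  weight lambda beta A <=
    lambda ^+ poly_size A / (1 + lambda) ^+ poly_nbh_size A *
    \sum_(B in nbh_subfamilies)
      profile_weight lambda (exp_neg1 beta) (edge_owners B).
Proof.
move=> lambda_ge0 beta_ge0; have /andP[x0 x1] := exp_neg1_itv beta_ge0.
rewrite /weight mulr_sumr.
rewrite [leRHS](eq_bigl (fun B => [forall i, B i \subset nbh (A i)])).
  apply: ler_sum => B /forallP sB.
  rewrite /profile_weight big_split /= exprD big_split /= !prodrXr.
  rewrite sum_indicator (sum_card_edge_owners sB) exp_negE // -!mulrA.
  apply: ler_wpM2l; first exact: exprn_ge0.
  rewrite mulrCA; apply: ler_wpM2l.
    by rewrite invr_ge0 exprn_ge0 ?addr_ge0.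
  apply: ler_wpM2l; first exact: exprn_ge0.
  by apply: ler_wiXn2l => //; apply: card_owned_edges.
by move=> B; rewrite inE.
Qed.

Lemma sum_edge_profiles_le (R : realType) (lambda x : R) :
  0 <= lambda -> 0 <= x <= 1 ->
  \sum_(B in nbh_subfamilies) profile_weight lambda x (edge_owners B) <=
    powR (1 + ((1 + lambda) ^+ k - 1) * x) k%:R^-1 ^+ poly_nbh_size A.
Proof.
move=> lambda_ge0 /andP[x0 x1]; set K := edge_owners (fun i => nbh (A i)).
rewrite -(big_imset _ edge_owners_inj) /=.
pose P := family (fun y (Z : {set 'I_k}) => Z \subset K y).
apply: le_trans (ler_sum_subset (P := P) _ _) _.
- move=> _ /imsetP[B /[!inE] /forallP sB ->]; apply/familyP => y.
  exact: edge_ownersS.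
- by move=> F; apply: profile_weight_ge0.
rewrite sum_profile_weight_family /poly_nbh_size.
rewrite -(sum_card_edge_owners (fun i => subxx _)) -prodrXr.
apply: ler_prod => y _; apply/andP; split.
  by rewrite addr_ge0 ?mulr_ge0 ?subr_ge0 ?exprn_ege1 ?lerDl.
apply: power_mean_monotone; rewrite ?addr_ge0 ?x0 ?x1 //.
by rewrite (leq_trans (max_card _)) ?card_ord.
Qed.

End EdgeOwners.

Unset Implicit Arguments.

Theorem lemma4p5 (R : realType) (d k : nat) (lambda : R) (beta : \bar R)
    (D : 'I_k -> bool) (A : 'I_k -> {set vtx d}) :
  (1 <= k)%N -> 0 < lambda -> (0 <= beta)%E ->
  D_polymer D A ->
  weight lambda beta A <=
    lambda ^+ poly_size A * alpha_tilde lambda beta k ^+ poly_nbh_size A.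
Proof.
move=> k_gt0 lambda_gt0 beta_ge0 [_ A_parity].
have lambda_ge0 := ltW lambda_gt0.
rewrite alpha_tildeE // expr_div_n mulrA mulrAC.
apply: le_trans (weight_le A_parity lambda_ge0 beta_ge0) _.
apply: ler_wpM2l; first by rewrite divr_ge0 ?exprn_ge0 ?addr_ge0.
exact: sum_edge_profiles_le (exp_neg1_itv beta_ge0).
Qed.
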